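(* Let $\Gamma=(U\cup V,E)$ be a $3$-regular bipartite graph and let $\hat\Gamma$, $\eta$, $\eta'$, $\mathrm{sgn}$ and $\mu(F,f)$ be as described in the context. For any $2$-factor $F$ of $\Gamma$, any functions $f,g:F\to\{0,1\}$ and any perfect matchings $\mu_1\in\mu(F,f)$ and $\mu_2\in\mu(F,g)$, we have $\mathrm{sgn}(\mu_1)=\mathrm{sgn}(\mu_2)$.
   Context: Construction of $\hat\Gamma$: for each vertex $v$ of $\Gamma$ with neighbours $x,y,z$, there are four inner vertices $a_{v,S}$, one for each subset $S\subseteq\{x,y,z\}$ of even size (the set $I_v$), and six outer vertices $b_{v,u,0},b_{v,u,1}$ for $u\in\{x,y,z\}$ (the set $O_v$). Within the gadget, $a_{v,S}$ is adjacent to $b_{v,u,1}$ if $u\in S$ and to $b_{v,u,0}$ if $u\notin S$. For each edge $e=\{u,v\}\in E$ and $i\in\{0,1\}$ there is an edge $e_i$ joining $b_{v,u,i}$ and $b_{u,v,i}$. No other edges. Let $X=\bigcup_{v\in U}I_v\cup\bigcup_{v\in V}O_v$, $Y=\bigcup_{v\in V}I_v\cup\bigcup_{v\in U}O_v$, $n=|X|=|Y|=10|U|$, and fix bijections $\eta:X\to[n]$, $\eta':Y\to[n]$. A perfect matching is a bijection $\mu:X\to Y$ with $\mu(x)$ adjacent to $x$ for all $x$; $\mathrm{sgn}(\mu)$ is the sign of the permutation $\eta'\circ\mu\circ\eta^{-1}$ of $[n]$. A perfect matching $\mu$ is uniform if for every $e\in E$ at most one of $e_0,e_1$ is in $\mu$;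 then $F_\mu$ is the set of $e\in E$ with exactly one of $e_0,e_1$ in $\mu$, and $f_\mu(e)=i$ iff $e_i\in\mu$. A $2$-factor of $\Gamma$ is a set $F\subseteq E$ such that every vertex is incident to exactly two edges of $F$. $\mu(F,f)$ is the set of uniform perfect matchings $\mu$ with $F_\mu=F$ and $f_\mu=f$. *)

From mathcomp Require Import all_boot all_fingroup.
Set Implicit Arguments. Unset Strict Implicit. Unset Printing Implicit Defensive.

Section Gadget.
Variables (U V : finType) (r : U -> V -> bool).
(* Gamma = (U \cup V, E) with E = { {u,v} | r u v } : a simple bipartite graph. *)

Definition vtx := (U + V)%type.

Definition isU (w : vtx) : bool := if w is inl _ then true else false.

Definition nbr (w x : vtx) : bool :=
  match w, x with
  | inl u, inr v => r u v
  | inr v, inl u => r u v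
  | _, _ => false
  end.

Definition N (w : vtx) : {set vtx} := [set x | nbr w x].

Definition cubic : Prop := forall w : vtx, #|N w| = 3.

(* vertices of hat Gamma (together with junk, filtered by the predicates below):
   inl (v, S)    stands for a_{v,S}
   inr (v, u, i) stands for b_{v,u,i} *)
Definition HV := ((vtx * {set vtx}) + (vtx * vtx * bool))%type.

Definition inner_ok (v : vtx) (S : {set vtx}) : bool := (S \subset N v) && ~~ odd #|S|.
Definition outer_ok (v u : vtx) : bool := nbr v u.

Definition Xset : {set HV} :=
  [set h : HV | match h with
                | inl (v, A) => isU v && inner_ok v A
                | inr (v, u, _) => ~~ isU v && outer_ok v u
                end].
Definition Yset : {set HV} :=
  [set h : HV | match h with
                | inl (v, A) => ~~ isU v && inner_ok v A
                | inr (v, u, _) => isU v && outer_ok v u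
                end].

Definition Xt := {h : HV | h \in Xset}.
Definition Yt := {h : HV | h \in Yset}.

Definition hadj (h h' : HV) : bool :=
  match h, h' with
  | inl (v, A), inr (v', u, i) => (v' == v) && nbr v u && (i == (u \in A))
  | inr (v', u, i), inl (v, A) => (v' == v) && nbr v u && (i == (u \in A))
  | inr (v, u, i), inr (v', u', i') =>
      (v' == u) && (u' == v) && (i == i') && nbr v u
  | _, _ => false
  end.

Definition perfect_matching (mu : Xt -> Yt) : Prop :=
  bijective mu /\ forall x : Xt, hadj (val x) (val (mu x)).

(* For an edge e = {u,v} (u in U, v in V), e_i joins b_{v,u,i} (in X) and
   b_{u,v,i} (in Y); e_i \in mu means mu maps the former to the latter. *)
Definition edge_in (mu : Xt -> Yt) (u : U) (v : V) (i : bool) : Prop :=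
  exists x : Xt, val x = inr (inr v, inl u, i) /\ val (mu x) = inr (inl u, inr v, i).

Definition two_factor (F : {set U * V}) : Prop :=
  [/\ forall e, e \in F -> r e.1 e.2,
      forall u : U, #|[set v : V | (u, v) \in F]| = 2
    & forall v : V, #|[set u : U | (u, v) \in F]| = 2].

(* mu \in mu(F,f): mu is a uniform perfect matching with F_mu = F and f_mu = f
   (on F). For every edge e of Gamma and i, e_i \in mu iff e \in F and i = f e. *)
Definition in_muFf (F : {set U * V}) (f : U * V -> bool) (mu : Xt -> Yt) : Prop :=
  perfect_matching mu /\
  forall (u : U) (v : V) (i : bool), r u v ->
    (edge_in mu u v i <-> ((u, v) \in F /\ i = f (u, v))).

End Gadget.

Arguments in_muFf [U V] r F f mu.
Arguments perfect_matching [U V] r mu.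
Arguments edge_in [U V] r mu u v i.

From HB Require Import structures.
From mathcomp Require Import all_boot all_fingroup.
Set Implicit Arguments. Unset Strict Implicit. Unset Printing Implicit Defensive.

(* Let rho = mu2^-1 mu1, a permutation of X of parity sgn mu1 * sgn mu2, and let theta be
   the involution of the outer vertices exchanging b_{v,u,0} and b_{v,u,1} whenever
   {u,v} is in F and f, g differ on it; theta carries the F-edges used by mu(F,g) to those
   used by mu(F,f). Then pi = mu2^-1 theta mu1 theta is a permutation of X with
   sgn pi = sgn theta_X * sgn rho * sgn theta_Y, and pi maps every gadget to itself.
   Inside the gadget of a vertex with F-neighbours P and Q, a matching of mu(F,h) pairs the
   four inner vertices with the four outer vertices off its F-edges in one of exactly two
   ways, and a finite computation shows that pi and theta both have parity d_P + d_Q on the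
   gadget, where d_c records whether f and g differ on the edge to c. Summing over the
   gadgets gives sgn pi = sgn theta_X * sgn theta_Y, so rho is even. *)

(** * Parity of permutations *)

Section SwapParity.
Variable T : eqType.

(* [swap_parity xs f] is the parity of the number of transpositions selection sort uses to
   turn [f] into the identity on [xs]; unlike [odd_perm] it evaluates on concrete maps. *)
Definition swap_step (x : T) (f : T -> T) : T -> T :=
  fun z => if f z == x then f x else if f z == f x then x else f z.

Fixpoint swap_parity (xs : seq T) (f : T -> T) : bool :=
  if xs is x :: xs' then (f x != x) (+) swap_parity xs' (swap_step x f) else false.

Lemma eq_swap_parity xs f g : {in xs, f =1 g} -> swap_parity xs f = swap_parity xs g.
Proof.
elim: xs f g => [//|x xs IH] f g fg /=.
rewrite fg ?mem_head //; congr addb; apply: IH => z zin.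
by rewrite /swap_step !fg ?mem_head // inE zin orbT.
Qed.
End SwapParity.

Lemma swap_parity_map (B T : eqType) (h : B -> T) (xs : seq B) (sg : B -> B) (f : T -> T) :
  injective h -> {in xs, forall b, f (h b) = h (sg b)} ->
  swap_parity (map h xs) f = swap_parity xs sg.
Proof.
move=> hinj; elim: xs sg f => [//|x xs IH] sg f fh /=.
rewrite fh ?mem_head // (inj_eq hinj); congr addb; apply: IH => b bin.
have bxs : b \in x :: xs by rewrite inE bin orbT.
by rewrite /swap_step !fh ?mem_head // !(inj_eq hinj); case: ifP => _ //; case: ifP.
Qed.

Lemma odd_perm_swap_parity (T : finType) (xs : seq T) (s : {perm T}) :
  {in [predC xs], s =1 id} -> odd_perm s = swap_parity xs s.
Proof.
elim: xs s => [|x xs IH] s sxs /=.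
  have -> : s = 1%g by apply/permP => z; rewrite sxs // perm1.
  by rewrite odd_perm1.
pose s' := (s * tperm x (s x))%g.
have -> : odd_perm s = odd_perm s' (+) (s x != x).
  by rewrite /s' odd_permM odd_tperm (eq_sym x) -addbA addbb addbF.
rewrite (IH s') 1?addbC; last first.
  move=> z; rewrite !inE => zxs; rewrite /s' permM.
  have [->|zx] := eqVneq z x; first by rewrite tpermR.
  have sz : s z = z by apply: sxs; rewrite !inE negb_or zx.
  rewrite sz tpermD // 1?eq_sym //.
  by apply: contra zx => /eqP e; rewrite -(perm_inj (etrans sz e)).
congr addb; apply: eq_swap_parity => z _; rewrite /s' permM /swap_step.
case: tpermP => [->|->|zx zsx]; rewrite ?eqxx //; first by case: eqP => [->|].
by rewrite (introF eqP zx) (introF eqP zsx).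
Qed.

Lemma odd_perm_transport (B T : finType) (h : B -> T) (xs : seq B) (sg : B -> B)
    (s : {perm T}) :
  injective h -> (forall b, b \in xs) ->
  (forall z, s z = z \/ exists b, z = h b) -> (forall b, s (h b) = h (sg b)) ->
  odd_perm s = swap_parity xs sg.
Proof.
move=> hinj xsT supp sh; rewrite (@odd_perm_swap_parity _ (map h xs)).
  by apply: swap_parity_map => // b _; exact: sh.
move=> z; rewrite inE; have [//|[b ->]] := supp z.
by rewrite map_f.
Qed.

Lemma odd_perm_transfer (B T : finType) (h : B -> T) (p : {perm B}) (s : {perm T}) :
  bijective h -> (forall b, s (h b) = h (p b)) -> odd_perm s = odd_perm p.
Proof.
case=> hI hK hIK sh; have enumB (b : B) : b \in enum B by rewrite mem_enum.
rewrite (odd_perm_transport (can_inj hK) enumB (sg := p)) //; last first.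
  by move=> z; right; exists (hI z).
by rewrite (@odd_perm_transport _ _ id _ p p _ enumB) // => z; right; exists z.
Qed.

Section Blocks.
Variables (T B : finType) (s : {perm T}) (blk : T -> B).
Hypothesis blk_s : forall z, blk (s z) = blk z.

Definition restr_fun (P : pred B) z := if blk z \in P then s z else z.

Lemma restr_inj (P : pred B) : injective (restr_fun P).
Proof.
move=> x y; rewrite /restr_fun.
case: (boolP (blk x \in P)) => Px; case: (boolP (blk y \in P)) => Py //.
- by move/perm_inj.
- by move=> e; move: Py; rewrite -e blk_s Px.
- by move=> e; move: Px; rewrite e blk_s Py.
Qed.

Definition block_perm (b : B) : {perm T} := perm (@restr_inj (pred1 b)).

Lemma block_permE b z : block_perm b z = if blk z == b then s z else z.
Proof. by rewrite permE /restr_fun. Qed.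

Lemma odd_perm_blocks : odd_perm s = \big[addb/false]_(b <- enum B) odd_perm (block_perm b).
Proof.
have restr_seq bs : uniq bs ->
    odd_perm (perm (@restr_inj (mem bs))) = \big[addb/false]_(b <- bs) odd_perm (block_perm b).
  elim: bs => [|b bs IH] /=.
    move=> _; rewrite big_nil -(odd_perm1 T); congr odd_perm.
    by apply/permP => z; rewrite permE perm1 /restr_fun.
  case/andP => bn ubs; rewrite big_cons -IH // -odd_permM; congr odd_perm.
  apply/permP => z; rewrite permM block_permE !permE /restr_fun inE.
  by case: (eqVneq (blk z) b) => [e|] //=; rewrite blk_s e (negbTE bn).
rewrite -restr_seq ?enum_uniq //; congr odd_perm; apply/permP => z.
by rewrite permE /restr_fun mem_enum.
Qed.
End Blocks.

(** * Local matchings in a gadget *)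

(* In the gadget of a vertex with F-neighbours P, Q and third neighbour W, the inner
   vertex a_S is indexed by b = (P \in S, Q \in S); then W \in S iff b.1 (+) b.2, and
   [label_bit k b] says whether the neighbour labelled k lies in S. *)
Inductive label := Lp | Lq | Lw.

Definition label_eqb (k l : label) : bool :=
  match k, l with Lp, Lp | Lq, Lq | Lw, Lw => true | _, _ => false end.

Lemma label_eqP : Equality.axiom label_eqb.
Proof. by case; case; constructor. Qed.

HB.instance Definition _ := hasDecEq.Build label label_eqP.

Definition label_bit (k : label) (b : bool * bool) : bool :=
  match k with Lp => b.1 | Lq => b.2 | Lw => b.1 (+) b.2 end.

Definition free_end (fp fq : bool) (k : label) (b : bool * bool) : bool :=
  match k with Lp => b.1 != fp | Lq => b.2 != fq | Lw => true end.

Definition bool_pairs : seq (bool * bool) :=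
  [:: (false, false); (false, true); (true, false); (true, true)].

Lemma mem_bool_pairs b : b \in bool_pairs.
Proof. by case: b => [[] []]. Qed.

(* [c b] labels the neighbour through which inner vertex b is matched, [fp] and [fq] are
   the values of h on the edges to P and Q, whose ends are taken by the F-edges. *)
Definition local_matching (fp fq : bool) (c : bool * bool -> label) : bool :=
  all (fun b => free_end fp fq (c b) b) bool_pairs &&
  all (fun b => all (fun b' => (b == b') ||
         ~~ ((c b == c b') && (label_bit (c b) b == label_bit (c b') b'))) bool_pairs) bool_pairs.

Lemma local_matchingP fp fq c :
  (forall b, free_end fp fq (c b) b) ->
  (forall b b', c b = c b' -> label_bit (c b) b = label_bit (c b') b' -> b = b') ->
  local_matching fp fq c.
Proof.
move=> free inj; apply/andP; split; apply/allP => b _ //.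
apply/allP => b' _; case: (eqVneq b b') => //= bb'; apply/negP => /andP [/eqP e1 /eqP e2].
by case/eqP: bb'; exact: inj.
Qed.

Definition local_matchA (fp fq : bool) (b : bool * bool) : label :=
  if b.1 == fp then Lw else if b.2 == fq then Lp else Lq.
Definition local_matchB (fp fq : bool) (b : bool * bool) : label :=
  if b.2 == fq then Lw else if b.1 == fp then Lq else Lp.

Lemma local_matching_cases fp fq c :
  local_matching fp fq c -> c =1 local_matchA fp fq \/ c =1 local_matchB fp fq.
Proof.
rewrite /local_matching /=.
case E1 : (c (false, false)); case E2 : (c (false, true));
case E3 : (c (true, false)); case E4 : (c (true, true));
case: fp; case: fq => //= _;
first [ by left; case=> [[] []]; rewrite ?E1 ?E2 ?E3 ?E4
      | by right; case=> [[] []]; rewrite ?E1 ?E2 ?E3 ?E4 ].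
Qed.

Definition label_flip (dp dq : bool) (k : label) : bool :=
  match k with Lp => dp | Lq => dq | Lw => false end.

(* The default [b] of [head] is never reached when [c1] and [c2] are local matchings. *)
Definition inner_perm (c1 c2 : bool * bool -> label) (dp dq : bool) (b : bool * bool) :=
  head b [seq b' <- bool_pairs | (c2 b' == c1 b) &&
            (label_bit (c1 b) b' == label_bit (c1 b) b (+) label_flip dp dq (c1 b))].

Lemma eq_inner_perm c1 c1' c2 c2' dp dq : c1 =1 c1' -> c2 =1 c2' ->
  inner_perm c1 c2 dp dq =1 inner_perm c1' c2' dp dq.
Proof.
by move=> E1 E2 b; rewrite /inner_perm; congr head; apply: eq_filter => b'; rewrite E1 E2.
Qed.

Lemma inner_permE fp fq gp gq c1 c2 b :
  local_matching fp fq c1 -> local_matching gp gq c2 ->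
  let sg := inner_perm c1 c2 (fp != gp) (fq != gq) in
  c2 (sg b) = c1 b /\
  label_bit (c1 b) (sg b) = label_bit (c1 b) b (+) label_flip (fp != gp) (fq != gq) (c1 b).
Proof.
move=> /local_matching_cases [] E1 /local_matching_cases [] E2;
rewrite /= (eq_inner_perm _ _ E1 E2) !E1 E2;
by case: fp fq gp gq {E1 E2} => [] [] [] []; case: b => [[] []].
Qed.

Lemma swap_parity_inner_perm fp fq gp gq c1 c2 :
  local_matching fp fq c1 -> local_matching gp gq c2 ->
  swap_parity bool_pairs (inner_perm c1 c2 (fp != gp) (fq != gq)) = (fp != gp) (+) (fq != gq).
Proof.
move=> /local_matching_cases [] E1 /local_matching_cases [] E2;
rewrite (eq_swap_parity (fun b _ => eq_inner_perm _ _ E1 E2 b));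
by case: fp fq gp gq {E1 E2} => [] [] [] [].
Qed.

Lemma swap_parity_flip dp dq :
  swap_parity bool_pairs (fun b => (b.1, b.2 (+) (if b.1 then dq else dp))) = dp (+) dq.
Proof. by case: dp; case: dq. Qed.

(** * Matchings of the hat graph *)

Section HatGraph.
Variables (U V : finType) (r : U -> V -> bool).
Local Notation vt := (vtx U V).
Local Notation HVt := (HV U V).
Local Notation X := (Xt r).
Local Notation Y := (Yt r).

Definition gadget (z : HVt) : vt := match z with inl (a, _) | inr (a, _, _) => a end.

Definition partner (z : HVt) : HVt := if z is inr (a, c, i) then inr (c, a, i) else z.

Lemma partnerK : involutive partner.
Proof. by case=> [//|[[]]]. Qed.

Lemma nbrC a c : nbr r a c = nbr r c a.
Proof. by case: a; case: c. Qed.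

Lemma hadjC z z' : hadj r z z' = hadj r z' z.
Proof.
case: z => [[a A]|[[a c] i]]; case: z' => [[a' A']|[[a' c'] i']] //=.
apply/idP/idP => /andP [/andP [/andP [/eqP -> /eqP ->] /eqP ->] nb];
by rewrite !eqxx nbrC.
Qed.

Lemma hadj_inner a A z : hadj r (inl (a, A)) z -> exists2 c, nbr r a c & z = inr (a, c, c \in A).
Proof. by case: z => [[]//|[[a' c] i]] /= /andP [/andP [/eqP -> nb] /eqP ->]; exists c. Qed.

Lemma hadj_outer a c i z :
  hadj r (inr (a, c, i)) z -> z = inr (c, a, i) \/ exists A, z = inl (a, A).
Proof.
case: z => [[a' A] /= /andP [/andP [/eqP -> _] _]|[[a' c'] i'] /=]; first by right; exists A.
by case/andP => /andP [/andP [/eqP -> /eqP ->] /eqP ->]; left.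
Qed.

Variable F : {set U * V}.

Definition Fedge (a c : vt) : bool :=
  match a, c with inl u, inr v | inr v, inl u => (u, v) \in F | _, _ => false end.

Definition edge_val (h : U * V -> bool) (a c : vt) : bool :=
  match a, c with inl u, inr v | inr v, inl u => h (u, v) | _, _ => false end.

(* [z] is an end of the edge e_i that every matching in mu(F,h) contains. *)
Definition edge_end (h : U * V -> bool) (z : HVt) : bool :=
  if z is inr (a, c, i) then Fedge a c && (i == edge_val h a c) else false.

Lemma FedgeC a c : Fedge a c = Fedge c a. Proof. by case: a; case: c. Qed.
Lemma edge_valC h a c : edge_val h a c = edge_val h c a. Proof. by case: a; case: c. Qed.

Lemma edge_end_partner h z : edge_end h (partner z) = edge_end h z.
Proof. by case: z => [//|[[a c] i]] /=; rewrite FedgeC edge_valC. Qed.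

Section Matching.
Variables (h : U * V -> bool) (mu : X -> Y) (muI : Y -> X).
Hypotheses (muF : in_muFf r F h mu) (muK : cancel mu muI) (muIK : cancel muI mu).

Lemma mu_adj x : hadj r (val x) (val (mu x)).
Proof. by case: muF => [[_]]. Qed.

Lemma mu_partner x a c i : val x = inr (a, c, i) ->
  val (mu x) = inr (c, a, i) <-> edge_end h (val x).
Proof.
move=> Ex; have := valP x; rewrite Ex inE /outer_ok.
case: a Ex => [//|v] Ex; case: c Ex => [u|//] Ex /= ruv.
case: muF => _ /(_ u v i ruv) [edge_inF F_edge_in]; split.
  by move=> Emu; case: edge_inF => [|-> ->]; [exists x | rewrite eqxx].
case/andP=> uvF /eqP ei; have [x' [Ex' <-]] := F_edge_in (conj uvF ei).
by congr (val (mu _)); apply: val_inj; rewrite Ex Ex'.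
Qed.

Lemma mu_inner x a A : val x = inl (a, A) ->
  exists2 c, nbr r a c & val (mu x) = inr (a, c, c \in A).
Proof. by move=> Ex; apply: hadj_inner; rewrite -Ex; exact: mu_adj. Qed.

Lemma edge_end_mu x : edge_end h (val (mu x)) = edge_end h (val x).
Proof.
case Ex: (val x) => [[a A]|[[a c] i]].
  have [c nac Emu] := mu_inner Ex.
  rewrite Emu; apply/negbTE/negP => e.
  have Xz : inr (c, a, c \in A) \in Xset r.
    move: (valP (mu x)); rewrite Emu !inE /outer_ok.
    by case: a {Ex Emu e} nac => // u; case: c.
  pose z : X := exist (fun w => w \in Xset r) _ Xz.
  have /(mu_partner (erefl (val z))) : edge_end h (val z).
    by rewrite -[val z]/(partner (inr (a, c, c \in A))) edge_end_partner.
  rewrite -Emu => /val_inj/(can_inj muK)/(congr1 val).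
  by rewrite Ex.
have Emu_iff := mu_partner Ex; rewrite -Ex.
case: (boolP (edge_end h (val x))) => e.
  by rewrite (proj2 Emu_iff e) -[inr (c, a, i)]/(partner (inr (a, c, i))) -Ex edge_end_partner.
have := mu_adj x; rewrite Ex => /hadj_outer [Emu|[A ->]] //.
by case/negP: e; apply: (proj1 Emu_iff).
Qed.

Lemma mu_edge_end x : edge_end h (val x) -> val (mu x) = partner (val x).
Proof. by case Ex: (val x) => [//|[[a c] i]] e; apply/(mu_partner Ex); rewrite Ex. Qed.

Lemma mu_outer x a c i : val x = inr (a, c, i) -> ~~ edge_end h (val x) ->
  exists A, val (mu x) = inl (a, A).
Proof.
move=> Ex ne; have := mu_adj x; rewrite Ex => /hadj_outer [Emu|//].
by case/negP: ne; apply/(mu_partner Ex).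
Qed.

Lemma gadget_mu x : ~~ edge_end h (val x) -> gadget (val (mu x)) = gadget (val x).
Proof.
case Ex: (val x) => [[a A]|[[a c] i]] ne; first by have [c _ ->] := mu_inner Ex.
by rewrite -Ex in ne; have [A ->] := mu_outer Ex ne.
Qed.

Lemma edge_end_muI y : edge_end h (val (muI y)) = edge_end h (val y).
Proof. by rewrite -{2}(muIK y) edge_end_mu. Qed.

Lemma muI_edge_end y : edge_end h (val y) -> val (muI y) = partner (val y).
Proof. by move=> e; rewrite -{2}(muIK y) mu_edge_end ?partnerK // edge_end_muI. Qed.

Lemma gadget_muI y : ~~ edge_end h (val y) -> gadget (val (muI y)) = gadget (val y).
Proof. by move=> ne; rewrite -{2}(muIK y) gadget_mu // edge_end_muI. Qed.

Lemma muI_inner y a A : val y = inl (a, A) ->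
  exists2 c, nbr r a c & val (muI y) = inr (a, c, c \in A).
Proof. by move=> Ey; apply: hadj_inner; rewrite -Ey hadjC -[in X in hadj _ _ X](muIK y) mu_adj. Qed.
End Matching.

Definition differ (f g : U * V -> bool) (a c : vt) : bool :=
  Fedge a c && (edge_val f a c != edge_val g a c).

Definition flip (f g : U * V -> bool) (z : HVt) : HVt :=
  if z is inr (a, c, i) then inr (a, c, i (+) differ f g a c) else z.

Lemma flipC f g : flip f g =1 flip g f.
Proof. by case=> [//|[[a c] i]]; rewrite /= /differ eq_sym. Qed.

Lemma flipK f g : involutive (flip f g).
Proof. by case=> [//|[[a c] i]]; rewrite /= -addbA addbb addbF. Qed.

Lemma gadget_flip f g z : gadget (flip f g z) = gadget z.
Proof. by case: z => [|[[]]]. Qed.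

Lemma flip_partner f g z : flip f g (partner z) = partner (flip f g z).
Proof. by case: z => [//|[[a c] i]]; rewrite /= /differ FedgeC !(edge_valC _ c). Qed.

Lemma edge_end_flip f g z : edge_end f (flip f g z) = edge_end g z.
Proof.
case: z => [//|[[a c] i]] /=; rewrite /differ.
by case: (Fedge a c) => //=; case: (edge_val f a c); case: (edge_val g a c); case: i.
Qed.

Lemma edge_end_flipC f g z : edge_end g (flip f g z) = edge_end f z.
Proof. by rewrite flipC edge_end_flip. Qed.

Lemma differC f g : differ f g =2 differ g f.
Proof. by move=> a c; rewrite /differ eq_sym. Qed.

Lemma mem_flip f g z (A : {set HVt}) :
  (forall a c i j, (inr (a, c, i) \in A) = (inr (a, c, j) \in A)) ->
  (flip f g z \in A) = (z \in A).
Proof. by move=> Abit; case: z => [//|[[a c] i]]; apply: Abit. Qed.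

Lemma Fedge_nbr a c : two_factor r F -> Fedge a c -> nbr r a c.
Proof. by case=> HF _ _; case: a; case: c => //= x y /HF. Qed.

Lemma gadget_nbrs a : cubic r -> two_factor r F -> exists P Q W,
  [/\ N r a = [set P; Q; W], uniq [:: P; Q; W], Fedge a P, Fedge a Q &
      forall c, Fedge a c -> (c == P) || (c == Q)].
Proof.
move=> cubic_r HF; have Fa2 : #|[set c | Fedge a c]| = 2.
  case: (HF) => _ degU degV; case: a => [u|v].
    rewrite -(degU u) -(card_imset _ (@inr_inj U V)); apply: eq_card => -[u'|v]; rewrite !inE.
      by apply/esym/imsetP => -[].
    by rewrite (mem_imset _ _ (@inr_inj U V)) inE.
  rewrite -(degV v) -(card_imset _ (@inl_inj U V)); apply: eq_card => -[u|v']; rewrite !inE.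
    by rewrite (mem_imset _ _ (@inl_inj U V)) inE.
  by apply/esym/imsetP => -[].
have /cards2P [P [Q [PQ EFa]]] : #|[set c | Fedge a c]| == 2 by rewrite Fa2.
have FaPQ c : Fedge a c = (c \in [set P; Q]) by rewrite -EFa inE.
have PQ_N : [set P; Q] \subset N r a.
  by apply/subsetP => c; rewrite -FaPQ inE; apply: Fedge_nbr.
have /cards1P [W EW] : #|N r a :\: [set P; Q]| == 1.
  by rewrite cardsD (setIidPr PQ_N) cubic_r cards2 PQ.
have : W \in N r a :\: [set P; Q] by rewrite EW set11.
rewrite in_setD !inE negb_or => /andP [/andP [WP WQ] _].
exists P, Q, W; split; rewrite ?FaPQ ?inE ?eqxx ?orbT //.
- apply/setP => c; rewrite in_setU -EW in_setD.
  by case: (boolP (c \in [set P; Q])) => [/(subsetP PQ_N) ->|].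
- by rewrite /= !inE negb_or PQ !(eq_sym _ W) WP WQ.
- by move=> c; rewrite FaPQ !inE.
Qed.

(** * The permutation pi, gadget by gadget *)

Section Permutations.
Variables (f g : U * V -> bool) (mu1 mu2 : X -> Y) (muI1 muI2 : Y -> X).
Hypotheses (mu1F : in_muFf r F f mu1) (mu2F : in_muFf r F g mu2).
Hypotheses (mu1K : cancel mu1 muI1) (muI1K : cancel muI1 mu1).
Hypotheses (mu2K : cancel mu2 muI2) (muI2K : cancel muI2 mu2).

Section FlipPerm.
Variable A : {set HVt}.
Hypothesis A_bit : forall a c i j, (inr (a, c, i) \in A) = (inr (a, c, j) \in A).

Definition flip_sub (x : {z : HVt | z \in A}) : {z : HVt | z \in A} :=
  Sub (flip f g (val x)) (etrans (mem_flip f g (val x) A_bit) (valP x)).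

Lemma flip_subK : involutive flip_sub.
Proof. by move=> x; apply: val_inj; rewrite /= flipK. Qed.

Definition flip_perm : {perm {z : HVt | z \in A}} := perm (inv_inj flip_subK).

Lemma flip_permE x : val (flip_perm x) = flip f g (val x).
Proof. by rewrite permE. Qed.

Lemma gadget_flip_perm x : gadget (val (flip_perm x)) = gadget (val x).
Proof. by rewrite flip_permE gadget_flip. Qed.
End FlipPerm.

Lemma Xset_bit a c i j : (inr (a, c, i) \in Xset r) = (inr (a, c, j) \in Xset r).
Proof. by rewrite !inE. Qed.
Lemma Yset_bit a c i j : (inr (a, c, i) \in Yset r) = (inr (a, c, j) \in Yset r).
Proof. by rewrite !inE. Qed.

Local Notation flipX := (flip_perm Xset_bit).
Local Notation flipY := (flip_perm Yset_bit).

Definition pi_map (x : X) : X := muI2 (flipY (mu1 (flipX x))).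

Lemma pi_map_inj : injective pi_map.
Proof. by move=> x y /(can_inj muI2K)/perm_inj/(can_inj mu1K)/perm_inj. Qed.

Lemma pi_map_edge_end x : edge_end g (val x) -> pi_map x = x.
Proof.
move=> e; have e1 : edge_end f (val (flipX x)) by rewrite flip_permE edge_end_flip.
have E1 : val (flipY (mu1 (flipX x))) = partner (val x).
  by rewrite flip_permE (mu_edge_end mu1F) // flip_permE (flip_partner f g) flipK.
apply: val_inj; rewrite /pi_map (muI_edge_end mu2F mu2K muI2K) E1 ?partnerK //.
by rewrite edge_end_partner.
Qed.

Lemma gadget_pi_map x : gadget (val (pi_map x)) = gadget (val x).
Proof.
have [/pi_map_edge_end -> //|ne] := boolP (edge_end g (val x)).
have ne1 : ~~ edge_end f (val (flipX x)) by rewrite flip_permE edge_end_flip.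
rewrite /pi_map (gadget_muI mu2F mu2K muI2K); last first.
  by rewrite flip_permE edge_end_flipC (edge_end_mu mu1F mu1K).
by rewrite flip_permE gadget_flip (gadget_mu mu1F) // flip_permE gadget_flip.
Qed.

Definition pi_perm : {perm X} := perm pi_map_inj.

Definition rho_perm : {perm X} :=
  perm (inj_comp (can_inj muI2K) (can_inj mu1K) : injective (muI2 \o mu1)).

Lemma odd_pi_permE : odd_perm pi_perm = odd_perm flipX (+) odd_perm rho_perm (+) odd_perm flipY.
Proof.
(* pi = flipX rho kappa, and kappa is conjugate to flipY by mu2. *)
pose kappa : {perm X} :=
  perm (inj_comp (can_inj muI2K) (inj_comp (@perm_inj _ flipY) (can_inj mu2K))
        : injective (muI2 \o flipY \o mu2)).
have -> : pi_perm = (flipX * rho_perm * kappa)%g.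
  by apply/permP => x; rewrite !permM !permE /pi_map /= !permE (muI2K (mu1 _)).
rewrite !odd_permM; congr addb; symmetry; apply: (odd_perm_transfer (h := mu2)).
  by exists muI2.
by move=> x; rewrite [in RHS]permE /= muI2K.
Qed.

Lemma gadget_pi_perm (x : X) : gadget (val (pi_perm x)) = gadget (val x).
Proof. by rewrite permE gadget_pi_map. Qed.

Section Gadget.
Variables a P Q W : vt.
Hypotheses (Na : N r a = [set P; Q; W]) (PQW : uniq [:: P; Q; W]).
Hypotheses (FaP : Fedge a P) (FaQ : Fedge a Q) (FaPQ : forall c, Fedge a c -> (c == P) || (c == Q)).

Definition label_nbr (k : label) : vt := match k with Lp => P | Lq => Q | Lw => W end.
Definition nbr_label (c : vt) : label := if c == P then Lp else if c == Q then Lq else Lw.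

Lemma label_nbrK : cancel label_nbr nbr_label.
Proof.
move: PQW; rewrite /= !inE negb_or => /andP [/andP [PQ PW] /andP [QW _]].
by case; rewrite /nbr_label /= ?eqxx // ?(eq_sym Q) ?(eq_sym W)
  ?(negbTE PQ) ?(negbTE PW) ?(negbTE QW).
Qed.

Lemma nbr_labelK c : c \in N r a -> label_nbr (nbr_label c) = c.
Proof.
by rewrite Na !inE /nbr_label -orbA; case: eqP => [-> _|_] //; case: eqP => [-> _|_ /eqP ->].
Qed.

Lemma label_nbr_N k : label_nbr k \in N r a.
Proof. by rewrite Na !inE; case: k; rewrite eqxx ?orbT. Qed.

Lemma FaW : Fedge a W = false.
Proof.
apply/negP => /FaPQ; move: PQW; rewrite /= !inE negb_or => /andP [/andP [_ PW] /andP [QW _]].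
by rewrite !(eq_sym W) (negbTE PW) (negbTE QW).
Qed.

Definition inner_set (b : bool * bool) : {set vt} := [set c in N r a | label_bit (nbr_label c) b].

Lemma mem_inner_set k b : (label_nbr k \in inner_set b) = label_bit k b.
Proof. by rewrite inE label_nbr_N label_nbrK. Qed.

Lemma card_gadget (A : {set vt}) : A \subset N r a -> #|A| = (P \in A) + (Q \in A) + (W \in A).
Proof.
move=> AN; rewrite cardE -addnA -(addn0 (W \in A)) -[RHS]/(count (mem A) [:: P; Q; W]).
rewrite -size_filter; apply/perm_size/uniq_perm; rewrite ?enum_uniq ?filter_uniq // => c.
by rewrite mem_enum mem_filter andb_idr // => /(subsetP AN); rewrite Na !inE -orbA.
Qed.

Lemma inner_set_sub b : inner_set b \subset N r a.
Proof. by apply/subsetP => c; rewrite inE => /andP []. Qed.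

Lemma inner_set_ok b : inner_ok r a (inner_set b).
Proof.
rewrite /inner_ok inner_set_sub card_gadget ?inner_set_sub //.
rewrite -[P]/(label_nbr Lp) -[Q]/(label_nbr Lq) -[W]/(label_nbr Lw) !mem_inner_set.
by case: b => [[] []].
Qed.

Lemma inner_set_index A : inner_ok r a A -> A = inner_set (P \in A, Q \in A).
Proof.
case/andP => AN; rewrite card_gadget // => even_A; apply/setP => c; rewrite inE.
case: (boolP (c \in N r a)) => [/nbr_labelK|cN]; last first.
  by apply/negbTE; apply: contra cN; apply: (subsetP AN).
move: (nbr_label c) => k <-; case: k => //=.
by move: even_A; case: (P \in A) => /=; case: (Q \in A); case: (W \in A).
Qed.

Lemma inner_set_inj : injective inner_set.
Proof.
move=> b b' e; have := mem_inner_set Lp b; have := mem_inner_set Lq b.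
by rewrite e !mem_inner_set; case: b b' {e} => [? ?] [? ?] /= -> ->.
Qed.

Definition outer (k : label) (i : bool) : HVt := inr (a, label_nbr k, i).

Lemma edge_end_outer h k b :
  edge_end h (outer k (label_bit k b)) = ~~ free_end (edge_val h a P) (edge_val h a Q) k b.
Proof. by case: k => /=; rewrite ?FaP ?FaQ ?FaW ?negbK. Qed.

Lemma flip_outer h1 h2 k i :
  flip h1 h2 (outer k i) = outer k (i (+) label_flip (differ h1 h2 a P) (differ h1 h2 a Q) k).
Proof. by case: k; rewrite /= /differ ?FaP ?FaQ ?FaW. Qed.

(* [m b] is the outer vertex matched with the inner vertex a_{S_b}: by mu when a is in U,
   by mu^-1 when a is in V. *)
Definition inner_matching h (m : bool * bool -> HVt) : Prop :=
  injective m /\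
  forall b, ~~ edge_end h (m b) /\ exists2 c, nbr r a c & m b = inr (a, c, c \in inner_set b).

Definition matched_label (z : HVt) : label := if z is inr (_, c, _) then nbr_label c else Lw.

Section InnerMatching.
Variables (h : U * V -> bool) (m : bool * bool -> HVt).
Hypothesis mM : inner_matching h m.
Local Notation lbl := (matched_label \o m).

Lemma inner_matchingE b : m b = outer (lbl b) (label_bit (lbl b) b).
Proof.
rewrite /outer /=; have [_ [c nac ->]] := mM.2 b; have cN : c \in N r a by rewrite inE.
by rewrite /= (nbr_labelK cN) [c \in _]inE cN.
Qed.

Lemma inner_matching_local : local_matching (edge_val h a P) (edge_val h a Q) lbl.
Proof.
apply: local_matchingP => [b|b b' e1 e2].
  by have [+ _] := mM.2 b; rewrite inner_matchingE edge_end_outer negbK.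
by apply: mM.1; rewrite inner_matchingE [m b']inner_matchingE e2 e1.
Qed.
End InnerMatching.

Definition gadget_perm h1 h2 (m1 m2 : bool * bool -> HVt) :=
  inner_perm (matched_label \o m1) (matched_label \o m2)
    (edge_val h1 a P != edge_val h2 a P) (edge_val h1 a Q != edge_val h2 a Q).

Section GadgetPerm.
Variables (h1 h2 : U * V -> bool) (m1 m2 : bool * bool -> HVt).
Hypotheses (m1M : inner_matching h1 m1) (m2M : inner_matching h2 m2).

Lemma flip_inner_matching b : flip h1 h2 (m1 b) = m2 (gadget_perm h1 h2 m1 m2 b).
Proof.
have [E2 E3] := inner_permE b (inner_matching_local m1M) (inner_matching_local m2M).
rewrite (inner_matchingE m1M) flip_outer (inner_matchingE m2M) /gadget_perm E2 E3.
by rewrite /differ FaP FaQ.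
Qed.

Lemma swap_parity_gadget_perm :
  swap_parity bool_pairs (gadget_perm h1 h2 m1 m2) = differ h1 h2 a P (+) differ h1 h2 a Q.
Proof.
by rewrite /differ FaP FaQ; apply: swap_parity_inner_perm; apply: inner_matching_local.
Qed.
End GadgetPerm.

Section FlipBlock.
Variable A : {set HVt}.
Hypothesis A_bit : forall a c i j, (inr (a, c, i) \in A) = (inr (a, c, j) \in A).

Lemma odd_flip_block_inner : (forall c i, inr (a, c, i) \notin A) ->
  odd_perm (block_perm (gadget_flip_perm A_bit) a) = false.
Proof.
move=> A_in; rewrite (@odd_perm_swap_parity _ [::]) // => z _; rewrite block_permE.
case: eqP => // ga; apply: val_inj; rewrite flip_permE.
case Ez: (val z) ga => [//|[[a' c] i]] /= ga; subst a'.
by have := valP z; rewrite Ez (negbTE (A_in c i)).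
Qed.

Lemma odd_flip_block_outer : (forall c i, c \in N r a -> inr (a, c, i) \in A) ->
  odd_perm (block_perm (gadget_flip_perm A_bit) a) = differ f g a P (+) differ f g a Q.
Proof.
move=> A_out; pose k (b : bool * bool) : label := if b.1 then Lq else Lp.
pose h (b : bool * bool) : {z : HVt | z \in A} :=
  Sub (outer (k b) b.2) (A_out _ b.2 (label_nbr_N (k b))).
have h_inj : injective h.
  move=> [x i] [y j] /(congr1 val) [/(congr1 nbr_label)]; rewrite !label_nbrK /k /= => kxy ->.
  by case: x y kxy => [] [].
rewrite -swap_parity_flip; apply: (odd_perm_transport h_inj mem_bool_pairs) => [z|b]; last first.
  by case: b => [[] i]; rewrite block_permE eqxx; apply: val_inj; rewrite flip_permE flip_outer.
rewrite block_permE; case: eqP => ga; last by left.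
case Ez: (val z) ga => [[a' A']|[[a' c] i]] /= ga; subst a'.
  by left; apply: val_inj; rewrite flip_permE Ez.
have [Dc|] := boolP (differ f g a c); last first.
  by move/negbTE=> Dc; left; apply: val_inj; rewrite flip_permE Ez /= Dc addbF.
right; case/andP: Dc => /FaPQ /orP [] /eqP ec _; [exists (false, i) | exists (true, i)];
by apply: val_inj; rewrite Ez ec.
Qed.
End FlipBlock.

Section InnerU.
Hypothesis aU : isU a.

Lemma inner_X_proof b : inl (a, inner_set b) \in Xset r.
Proof. by rewrite inE aU inner_set_ok. Qed.

Definition inner_X b : X := Sub (inl (a, inner_set b)) (inner_X_proof b).

Lemma inner_X_inj : injective inner_X.
Proof. by move=> b b' /(congr1 val) [/inner_set_inj]. Qed.

Lemma inner_matching_mu h mu muI : in_muFf r F h mu -> cancel mu muI ->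
  inner_matching h (fun b => val (mu (inner_X b))).
Proof.
move=> muF muK; split=> [b b' /val_inj/(can_inj muK)/inner_X_inj //|b].
by rewrite (edge_end_mu muF muK); split=> //; apply: (mu_inner muF).
Qed.

Lemma odd_pi_block_U :
  odd_perm (block_perm gadget_pi_perm a) = differ f g a P (+) differ f g a Q.
Proof.
have m1M := inner_matching_mu mu1F mu1K; have m2M := inner_matching_mu mu2F mu2K.
rewrite -(swap_parity_gadget_perm m1M m2M); apply: (odd_perm_transport inner_X_inj mem_bool_pairs).
  move=> x; rewrite block_permE; case: eqP => ga; last by left.
  right; case Ex: (val x) ga => [[a' A]|[[a' c] i]] /= ga; subst a'; have := valP x; rewrite Ex inE.
    case/andP=> _ /inner_set_index EA; exists (P \in A, Q \in A).
    by apply: val_inj; rewrite Ex /= -EA.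
  by rewrite aU.
move=> b; rewrite block_permE /= eqxx permE; apply: (can_inj mu2K).
rewrite /pi_map (muI2K (flipY _)); apply: val_inj.
rewrite flip_permE -(flip_inner_matching m1M m2M).
by congr (flip f g (val (mu1 _))); apply: val_inj; rewrite flip_permE.
Qed.
End InnerU.

Section InnerV.
Hypothesis aV : ~~ isU a.

Lemma inner_Y_proof b : inl (a, inner_set b) \in Yset r.
Proof. by rewrite inE aV inner_set_ok. Qed.

Definition inner_Y b : Y := Sub (inl (a, inner_set b)) (inner_Y_proof b).

Lemma inner_Y_inj : injective inner_Y.
Proof. by move=> b b' /(congr1 val) [/inner_set_inj]. Qed.

Lemma inner_matching_muI h mu muI : in_muFf r F h mu -> cancel mu muI -> cancel muI mu ->
  inner_matching h (fun b => val (muI (inner_Y b))).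
Proof.
move=> muF muK muIK; split=> [b b' /val_inj/(can_inj muIK)/inner_Y_inj //|b].
by rewrite (edge_end_muI muF muK muIK); split=> //; apply: (muI_inner muF).
Qed.

Lemma odd_pi_block_V :
  odd_perm (block_perm gadget_pi_perm a) = differ f g a P (+) differ f g a Q.
Proof.
have m2M := inner_matching_muI mu2F mu2K muI2K; have m1M := inner_matching_muI mu1F mu1K muI1K.
rewrite differC (differC _ _ a Q) -(swap_parity_gadget_perm m2M m1M).
apply: (odd_perm_transport (inj_comp (can_inj muI2K) inner_Y_inj) mem_bool_pairs).
  move=> x; rewrite block_permE; case: eqP => ga; last by left.
  have [e|ne] := boolP (edge_end g (val x)); first by left; rewrite permE pi_map_edge_end.
  right; case Ex: (val x) ga => [[a' A]|[[a' c] i]] /= ga; subst a'.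
    by have := valP x; rewrite Ex inE (negbTE aV).
  have [A EA] := mu_outer mu2F Ex ne.
  have := valP (mu2 x); rewrite EA inE => /andP [_ /inner_set_index EA'].
  exists (P \in A, Q \in A); apply: (can_inj mu2K); rewrite /= muI2K; apply: val_inj.
  by rewrite EA /= -EA'.
move=> b; have [c _ Eb] := muI_inner mu2F muI2K (erefl (val (inner_Y b))).
rewrite block_permE Eb /= eqxx permE /pi_map; congr muI2.
have -> : flipX (muI2 (inner_Y b)) = muI1 (inner_Y (gadget_perm g f
    (fun b => val (muI2 (inner_Y b))) (fun b => val (muI1 (inner_Y b))) b)).
  by apply: val_inj; rewrite flip_permE flipC (flip_inner_matching m2M m1M).
by apply: val_inj; rewrite flip_permE muI1K.
Qed.
End InnerV.
End Gadget.

Hypotheses (cubic_r : cubic r) (HF : two_factor r F).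

Lemma odd_pi_block a :
  odd_perm (block_perm gadget_pi_perm a) =
  odd_perm (block_perm (gadget_flip_perm Xset_bit) a) (+)
  odd_perm (block_perm (gadget_flip_perm Yset_bit) a).
Proof.
have [P [Q [W [Na PQW FaP FaQ FaPQ]]]] := gadget_nbrs a cubic_r HF.
have [aU|aV] := boolP (isU a).
  have X_in c i : inr (a, c, i) \notin Xset r by rewrite inE aU.
  have Y_out c i : c \in N r a -> inr (a, c, i) \in Yset r by rewrite !inE aU.
  rewrite (odd_pi_block_U Na PQW FaP FaQ FaPQ aU) (odd_flip_block_inner Xset_bit X_in).
  by rewrite (odd_flip_block_outer Na PQW FaP FaQ FaPQ Yset_bit Y_out).
have X_out c i : c \in N r a -> inr (a, c, i) \in Xset r by rewrite !inE aV.
have Y_in c i : inr (a, c, i) \notin Yset r by rewrite inE (negbTE aV).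
rewrite (odd_pi_block_V Na PQW FaP FaQ FaPQ aV) (odd_flip_block_inner Yset_bit Y_in).
by rewrite (odd_flip_block_outer Na PQW FaP FaQ FaPQ Xset_bit X_out) addbF.
Qed.

Lemma odd_rho_perm : odd_perm rho_perm = false.
Proof.
have : odd_perm pi_perm = odd_perm flipX (+) odd_perm flipY.
  rewrite (odd_perm_blocks gadget_pi_perm) (odd_perm_blocks (gadget_flip_perm Xset_bit)).
  rewrite (odd_perm_blocks (gadget_flip_perm Yset_bit)) -big_split.
  by apply: eq_bigr => a _; exact: odd_pi_block.
by rewrite odd_pi_permE; case: (odd_perm rho_perm); case: (odd_perm flipX); case: (odd_perm flipY).
Qed.
End Permutations.
End HatGraph.

Theorem mainTheorem5 (U V : finType) (r : U -> V -> bool) (Hcubic : cubic r)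
  (eta : Xt r -> 'I_(10 * #|U|)) (eta' : Yt r -> 'I_(10 * #|U|))
  (Heta : bijective eta) (Heta' : bijective eta')
  (F : {set U * V}) (HF : two_factor r F) (f g : U * V -> bool)
  (mu1 mu2 : Xt r -> Yt r) (H1 : in_muFf r F f mu1) (H2 : in_muFf r F g mu2)
  (s1 s2 : 'S_(10 * #|U|))
  (Hs1 : forall x : Xt r, s1 (eta x) = eta' (mu1 x))
  (Hs2 : forall x : Xt r, s2 (eta x) = eta' (mu2 x)) :
  odd_perm s1 = odd_perm s2.
Proof.
have [[[muI1 mu1K muI1K] _] _] := H1; have [[[muI2 mu2K muI2K] _] _] := H2.
have rho_even := odd_rho_perm H1 H2 mu1K muI1K mu2K muI2K Hcubic HF.
(* s1 s2^-1 is rho_perm transported along eta. *)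
suff : odd_perm (s1 * s2^-1)%g = false.
  by rewrite odd_permM odd_permV; case: (odd_perm s1); case: (odd_perm s2).
rewrite -rho_even; apply: (odd_perm_transfer Heta) => x.
by rewrite permM Hs1 -(muI2K (mu1 x)) -Hs2 permK permE.
Qed.
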